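(* Let $X$ be an infinite discrete space and $G$ a subgroup of $\mathrm S(X)$ with the permutation topology $\tau_\partial$. Let $\mathcal U_X$ be the maximal equiuniformity on $X$, $\mathcal U$ the uniformity on $G$ defined below, and $L\wedge R$ the Roelcke uniformity of $G$. (1) Suppose that for any points $x_1,\dots,x_n\in X$, $n\in\mathbb N$, and any $g,h\in G$ with $h(x_k)\in \mathrm{St}_{x_1,\dots,x_n}\,g(x_k)$ for $k=1,\dots,n$, there exist $f\in\mathrm{St}_{x_1,\dots,x_n}$ and $g'\in g\,\mathrm{St}_{x_1,\dots,x_n}$ with $h=f\circ g'$. Then $L\wedge R=\mathcal U$. (2) If $L\wedge R=\mathcal U$ and $\mathcal U_X$ is totally bounded, then $G$ is Roelcke precompact and the Roelcke compactification of $G$ is the closure of $\imath(G)$ in $(\beta_GX)^X$. (3) Suppose $L\wedge R=\mathcal U$ and $\mathcal U_X$ is totally bounded, and suppose that for every point $x\in\beta_GX\setminus X$ and every entourage $U$ of $\tilde{\mathcal U}_X$ there exist points $x_1,\dots,x_n\in X$ and an entourage $V$ of $\tilde{\mathcal U}_X$ such that for every $g\in G$ $$\{h\in G\mid (g(x_k),h(x_k))\in V,\ k=1,\dots,n\}\subset\{h\in G\mid (g(x),h(x))\in U\}.$$ Then $\mathcal U=\tilde{\mathcal U}$ and the Roelcke compactification of $(G,\tau_\partial)$ is the enveloping Ellis semigroup of the action $G\curvearrowright\beta_GX$, i.e. the closure of $\jmath(G)$ in $(\beta_GX)^{\beta_GX}$.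
   Context: $\tau_\partial$: group topology with identity neighbourhood base the pointwise stabilizers $\mathrm{St}_{x_1,\dots,x_n}=\{g\mid g(x_i)=x_i\}$. The maximal equiuniformity $\mathcal U_X$ has as base the partitions $\{\mathrm{St}_{x_1,\dots,x_n}x\mid x\in X\}$ of $X$ into orbits of stabilizers, $x_1,\dots,x_n\in X$. $\beta_GX$ is the completion of $X$ with respect to $\mathcal U_X$ (when totally bounded, the maximal equivariant compactification), $\tilde{\mathcal U}_X$ the extension of $\mathcal U_X$ to $\beta_GX$; each $g\in G$ extends continuously to $\beta_GX$. $\imath:G\to X^X\subset(\beta_GX)^X$, $\imath(g)=(g(x))_{x\in X}$, and $\jmath:G\to(\beta_GX)^{\beta_GX}$, $\jmath(g)=(g(x))_{x\in\beta_GX}$. $\mathcal U$ is the restriction to $\imath(G)=G$ of the product uniformity on $X^X$ of copies of $\mathcal U_X$ (base: coverings $\{\{h\mid (g(x_k),h(x_k))\in\mathrm U,\ k\le n\}\mid g\in G\}$); $\tilde{\mathcal U}$ is the restriction to $\jmath(G)=G$ of the product uniformity on $(\beta_GX)^{\beta_GX}$ of copies of $\tilde{\mathcal U}_X$. The Roelcke uniformity $L\wedge R$ is the greatest lower bound of the left and right uniformities; $G$ is Roelcke precompact if it is totally bounded, and then the Roelcke compactification is the completion of $G$ with respect to $L\wedge R$. *)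

From HB Require Import structures.
From mathcomp Require Import all_boot all_order all_algebra.
From mathcomp Require Import all_classical all_reals all_analysis.
Set Implicit Arguments. Unset Strict Implicit. Unset Printing Implicit Defensive.
Local Open Scope classical_set_scope.

Definition ent (T : Type) := set (set (T * T)).

Definition gen (T : Type) (Bs : ent T) : ent T :=
  [set D | exists E, Bs E /\ E `<=` D].

Definition is_uniformity (T : Type) (W : ent T) : Prop :=
  W setT /\
  (forall D E, W D -> D `<=` E -> W E) /\
  (forall D E, W D -> W E -> W (D `&` E)) /\
  (forall D, W D -> forall x, D (x, x)) /\
  (forall D, W D -> W [set p | D (p.2, p.1)]) /\
  (forall D, W D -> exists E, W E /\
      forall x y z, E (x, y) -> E (y, z) -> D (x, z)).

Definition is_meet (T : Type) (W1 W2 W : ent T) : Prop :=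
  [/\ is_uniformity W, W `<=` W1, W `<=` W2 &
      forall W', is_uniformity W' -> W' `<=` W1 -> W' `<=` W2 -> W' `<=` W].

Definition tot_bounded (T : Type) (W : ent T) : Prop :=
  forall D, W D -> exists F : set T, finite_set F /\
    forall x, exists2 y, F y & D (y, x).

Definition perm_subgroup (X : Type) (G : set (X -> X)) : Prop :=
  [/\ forall g, G g -> bijective g,
      G id,
      (forall g h, G g -> G h -> G (g \o h)) &
      (forall g, G g -> exists h, [/\ G h, cancel g h & cancel h g])].

Definition GT (X : Type) (G : set (X -> X)) := {g : X -> X | G g}.

Definition St (X : Type) (G : set (X -> X)) (F : set X) : set (X -> X) :=
  [set s | G s /\ forall x, F x -> s x = x].

Definition leftU (X : Type) (G : set (X -> X)) : ent (GT G) :=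
  gen [set D | exists F : set X, finite_set F /\
    D = [set p : GT G * GT G | exists2 s, St G F s & proj1_sig p.2 = proj1_sig p.1 \o s]].
Arguments leftU {X} G.

Definition rightU (X : Type) (G : set (X -> X)) : ent (GT G) :=
  gen [set D | exists F : set X, finite_set F /\
    D = [set p : GT G * GT G | exists2 s, St G F s & proj1_sig p.2 = s \o proj1_sig p.1]].
Arguments rightU {X} G.

(* maximal equiuniformity U_X: base the partitions into St_F-orbits *)
Definition UX (X : Type) (G : set (X -> X)) : ent X :=
  gen [set D | exists F : set X, finite_set F /\
    D = [set p : X * X | exists2 s, St G F s & p.2 = s p.1]].
Arguments UX {X} G.

(* the uniformity \mathcal U on G: restriction of the product uniformity of
   X^X (factors U_X) along g |-> (g(x))_x *)
Definition UG (X : Type) (G : set (X -> X)) : ent (GT G) :=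
  gen [set D | exists (F : set X) (U : set (X * X)), [/\ finite_set F, UX G U &
    D = [set p : GT G * GT G | forall x, F x -> U (proj1_sig p.1 x, proj1_sig p.2 x)]]].
Arguments UG {X} G.

Definition prod_comap (T Y : Type) (B : uniformType) (i : T -> Y -> B) : ent T :=
  gen [set D | exists (F : set Y) (E : set (B * B)), [/\ finite_set F, entourage E &
    D = [set p : T * T | forall y, F y -> E (i p.1 y, i p.2 y)]]].

Definition is_completion (X : Type) (W : ent X) (B : uniformType) (e : X -> B) : Prop :=
  [/\ hausdorff_space B,
      (forall F : set_system B, ProperFilter F -> cauchy F -> exists b : B, F --> b),
      injective e,
      dense (range e) &
      W = gen [set D | exists2 E, entourage E & D = [set p : X * X | E (e p.1, e p.2)]]].

Definition roelcke_precompact (X : Type) (G : set (X -> X)) : Prop :=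
  forall W, is_meet (leftU G) (rightU G) W -> tot_bounded W.

(* The Roelcke compactification (completion of (G, L /\ R)) is the closure of
   i(G) in B^Y (product uniformity): i is a uniform embedding of (G, L /\ R)
   into B^Y. *)
Definition roelcke_compactification_is (X : Type) (G : set (X -> X))
    (Y : Type) (B : uniformType) (i : GT G -> Y -> B) : Prop :=
  forall W, is_meet (leftU G) (rightU G) W -> injective i /\ W = prod_comap i.

Definition extends_action (X : Type) (G : set (X -> X)) (B : uniformType)
    (e : X -> B) (act : GT G -> B -> B) : Prop :=
  forall g : GT G, continuous (act g) /\ forall x, act g (e x) = e (proj1_sig g x).

Definition hyp1 (X : Type) (G : set (X -> X)) : Prop :=
  forall F : set X, finite_set F -> forall g h : GT G,
    (forall x, F x -> exists2 s, St G F s & proj1_sig h x = s (proj1_sig g x)) ->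
    exists f s, [/\ St G F f, St G F s & proj1_sig h = f \o (proj1_sig g \o s)].

Definition hyp3 (X : Type) (G : set (X -> X)) (B : uniformType) (e : X -> B)
    (act : GT G -> B -> B) : Prop :=
  forall b : B, ~ range e b -> forall U, entourage U ->
    exists (F : set X) (V : set (B * B)), [/\ finite_set F, entourage V &
      forall g : GT G,
        [set h : GT G | forall x, F x -> V (e (proj1_sig g x), e (proj1_sig h x))]
        `<=` [set h : GT G | U (act g b, act h b)]].

From HB Require Import structures.
From mathcomp Require Import all_boot all_order all_algebra.
From mathcomp Require Import all_classical all_reals all_analysis.
From mathcomp Require Import finmap.
Local Open Scope classical_set_scope.
Set Implicit Arguments.
Unset Strict Implicit.

(* The uniformity U on G is generated by the relations "g(x) and h(x) lie in
   the same St_F-orbit for every x in F", F finite.  Each of them contains a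
   basic left and a basic right entourage of St_F, and the hypothesis of (1)
   says that every pair in it factors as a left step followed by a right step,
   so U is the greatest uniformity below L and R.  Since U is a finite-product
   uniformity of copies of U_X, it is totally bounded with U_X and is the
   uniformity induced by the product uniformity of (beta_G X)^X.  In (3) the
   hypothesis bounds every coordinate at a point of beta_G X \ X by finitely
   many coordinates in X, so the two product uniformities agree on G. *)

Lemma finite_set_ind T (P : set T -> Prop) :
  P set0 -> (forall A x, P A -> P (x |` A)) -> forall A, finite_set A -> P A.
Proof.
elim/Pchoice: T => T in P *; move=> P0 PU _ /finite_fsetP[S ->].
have -> : [set` S] = [set x | x \in (S : seq T)] by [].
elim: (S : seq T) => [|a s IH]; first by rewrite set_nil.
have -> : [set` a :: s] = a |` [set` s].
  apply/predeqP => x /=; rewrite in_cons.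
  by split=> [/orP[/eqP->|]|[->|->]]; rewrite ?eqxx ?orbT; [left|right|..].
exact: PU.
Qed.

Lemma gen_base T (Bs : ent T) D : Bs D -> gen Bs D.
Proof. by move=> BD; exists D; split. Qed.

Lemma genS T (Bs : ent T) D E : gen Bs D -> D `<=` E -> gen Bs E.
Proof. by move=> [D0 [BD0 D0D]] DE; exists D0; split=> //; exact: subset_trans DE. Qed.

Lemma is_meet_unique T (W1 W2 V W : ent T) :
  is_meet W1 W2 V -> is_meet W1 W2 W -> W = V.
Proof. by move=> [uV V1 V2 maxV] [uW W1' W2' maxW]; apply/seteqP; split; auto. Qed.

Lemma uniformity_filter T (W : ent T) : is_uniformity W -> Filter W.
Proof. by move=> [WT [WS [WI _]]]; split=> // D E DE WD; exact: WS WD DE. Qed.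

Definition partial_equiv T (R : set (T * T)) :=
  (forall x y, R (x, y) -> R (y, x)) /\
  (forall x y z, R (x, y) -> R (y, z) -> R (x, z)).

Definition has_finite_net T (D : set (T * T)) :=
  exists N : set T, finite_set N /\ forall x, exists2 y, N y & D (y, x).

Lemma has_finite_netS T (D E : set (T * T)) :
  D `<=` E -> has_finite_net D -> has_finite_net E.
Proof.
move=> DE [N [finN netN]]; exists N; split=> // x.
by have [y Ny Dyx] := netN x; exists y => //; exact: DE.
Qed.

Lemma finite_net_meet_comap T S (t0 : T) (R : set (T * T)) (Q : set (S * S))
    (f : T -> S) :
  partial_equiv R -> partial_equiv Q -> has_finite_net R -> has_finite_net Q ->
  has_finite_net [set p | R p /\ Q (f p.1, f p.2)].
Proof.
move=> [Rsym Rtrans] [Qsym Qtrans] [N [finN netN]] [A [finA netA]].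
(* c (n, a) is a common point of the R-class of n and the f-preimage of the
   Q-class of a, when there is one; t0 is only a default. *)
have /choice[c cP] : forall p : T * S, exists c : T,
    (exists t, R (p.1, t) /\ Q (p.2, f t)) -> R (p.1, c) /\ Q (p.2, f c).
  move=> p; have [[t Rt]|nex] := pselect (exists t, R (p.1, t) /\ Q (p.2, f t)).
    by exists t => _.
  by exists t0 => /nex.
exists (c @` (N `*` A)); split; first exact/finite_image/finite_setX.
move=> t; have [n Nn Rnt] := netN t; have [a Aa Qat] := netA (f t).
have [Rnc Qac] := cP (n, a) (ex_intro _ t (conj Rnt Qat)).
exists (c (n, a)); first by exists (n, a).
by split; [exact: Rtrans (Rsym _ _ Rnc) Rnt | exact: Qtrans (Qsym _ _ Qac) Qat].
Qed.

Definition pointwise T Y S (f : T -> Y -> S) (F : set Y) (Q : set (S * S)) :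
  set (T * T) := [set p | forall y, F y -> Q (f p.1 y, f p.2 y)].

Lemma subset_pointwise T Y S (f : T -> Y -> S) F F' (Q Q' : set (S * S)) :
  F `<=` F' -> Q `<=` Q' -> pointwise f F' Q `<=` pointwise f F Q'.
Proof. by move=> FF' QQ' p fp y /FF' /fp /QQ'. Qed.

Lemma partial_equiv_pointwise T Y S (f : T -> Y -> S) F (Q : set (S * S)) :
  partial_equiv Q -> partial_equiv (pointwise f F Q).
Proof.
move=> [Qsym Qtrans]; split=> [g h gh|g h k gh hk] y Fy; first exact: Qsym _ _ (gh y Fy).
exact: Qtrans (gh y Fy) (hk y Fy).
Qed.

Lemma finite_net_pointwise T Y S (t0 : T) (f : T -> Y -> S) (Q : set (S * S))
    (F : set Y) :
  partial_equiv Q -> has_finite_net Q -> finite_set F ->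
  has_finite_net (pointwise f F Q).
Proof.
move=> Qper Qnet; move: F; apply: finite_set_ind => [|F y netF].
  by exists [set t0]; split=> [|t]; [exact: finite_set1 | exists t0 => // ? []].
have := finite_net_meet_comap t0 (f^~ y) (partial_equiv_pointwise f F Qper) Qper netF Qnet.
by apply: has_finite_netS => p [Fp Qp] z [->|Fz]; [exact: Qp | exact: Fp].
Qed.

Lemma prod_comap_pointwise T Y (B : uniformType) (i : T -> Y -> B) F E :
  finite_set F -> entourage E -> prod_comap i (pointwise i F E).
Proof. by move=> finF entE; apply: gen_base; exists F, E. Qed.

Lemma prod_comap_reindex T Y Y' (B : uniformType) (i : T -> Y -> B) (h : Y' -> Y) :
  prod_comap (fun t => i t \o h) `<=` prod_comap i.
Proof.
move=> D [_ [[F [E [finF entE ->]]] sD]]; apply: (genS _ sD).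
apply: (genS (prod_comap_pointwise i (finite_image h finF) entE)).
by move=> p hp y Fy; apply: hp; exists y.
Qed.

Section PermutationGroup.
Variables (X : Type) (G : set (X -> X)).
Hypothesis PG : perm_subgroup G.

Lemma St_id F : St G F id.
Proof. by case: PG => _ Gid _ _; split. Qed.

Lemma St_comp F s t : St G F s -> St G F t -> St G F (s \o t).
Proof.
case: PG => _ _ Gcomp _ [Gs sF] [Gt tF]; split; first exact: Gcomp.
by move=> x Fx /=; rewrite tF // sF.
Qed.

Lemma St_inv F s : St G F s -> exists2 t, St G F t & cancel s t.
Proof.
case: PG => _ _ _ Ginv [Gs sF]; have [t [Gt st _]] := Ginv s Gs.
by exists t => //; split=> // x Fx; move: (st x); rewrite sF.
Qed.

Lemma subset_St F F' : F `<=` F' -> St G F' `<=` St G F.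
Proof. by move=> FF' s [Gs sF']; split=> // x /FF'; exact: sF'. Qed.

Definition orbit_rel (F : set X) : set (X * X) :=
  [set p | exists2 s, St G F s & p.2 = s p.1].

Lemma orbit_rel_refl F x : orbit_rel F (x, x).
Proof. by exists id; first exact: St_id. Qed.

Lemma orbit_rel_sym F x y : orbit_rel F (x, y) -> orbit_rel F (y, x).
Proof. by move=> [s Ss /= ->]; have [t St st] := St_inv Ss; exists t => //=; rewrite st. Qed.

Lemma orbit_rel_trans F x y z :
  orbit_rel F (x, y) -> orbit_rel F (y, z) -> orbit_rel F (x, z).
Proof. by move=> [s Ss /= ->] [t St /= ->]; exists (t \o s); first exact: St_comp. Qed.

Lemma orbit_rel_per F : partial_equiv (orbit_rel F).
Proof. by split=> [x y|x y z]; [exact: orbit_rel_sym | exact: orbit_rel_trans]. Qed.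

Lemma subset_orbit_rel F F' : F `<=` F' -> orbit_rel F' `<=` orbit_rel F.
Proof. by move=> FF' [x y] [s Ss /= ->]; exists s => //; exact: subset_St Ss. Qed.

Lemma UX_orbit_rel F : finite_set F -> UX G (orbit_rel F).
Proof. by move=> finF; apply: gen_base; exists F. Qed.

Lemma UXP U : UX G U <-> exists2 F, finite_set F & orbit_rel F `<=` U.
Proof.
split=> [[_ [[F [finF ->]] sU]]|[F finF sU]]; first by exists F.
exact: genS (UX_orbit_rel finF) sU.
Qed.

Definition pointwise_orbit_rel F := pointwise (fun g : GT G => proj1_sig g) F (orbit_rel F).

Lemma subset_pointwise_orbit_rel F F' :
  F `<=` F' -> pointwise_orbit_rel F' `<=` pointwise_orbit_rel F.
Proof. by move=> FF'; apply: subset_pointwise => //; exact: subset_orbit_rel. Qed.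

Lemma UGP D : UG G D <-> exists2 F, finite_set F & pointwise_orbit_rel F `<=` D.
Proof.
split=> [[_ [[F [U [finF /UXP[F' finF' sU] ->]]] sD]]|[F finF sD]].
  exists (F `|` F'); first by rewrite finite_setU.
  apply: subset_trans sD; apply: subset_pointwise; first exact: subsetUl.
  exact: subset_trans (subset_orbit_rel (@subsetUr _ F F')) sU.
apply: (genS _ sD); apply: gen_base.
by exists F, (orbit_rel F); split=> //; exact: UX_orbit_rel.
Qed.

Lemma UG_uniformity : is_uniformity (UG G).
Proof.
split; first by apply/UGP; exists set0 => //; exact: finite_set0.
split; first by move=> D E; exact: genS.
split.
  move=> D E /UGP[F1 fin1 sD] /UGP[F2 fin2 sE]; apply/UGP.
  exists (F1 `|` F2); first by rewrite finite_setU.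
  move=> p p12; split.
    by apply: sD; apply: subset_pointwise_orbit_rel p12; exact: subsetUl.
  by apply: sE; apply: subset_pointwise_orbit_rel p12; exact: subsetUr.
split; first by move=> D /UGP[F _ sD] g; apply: sD => x _; exact: orbit_rel_refl.
split.
  move=> D /UGP[F finF sD]; apply/UGP; exists F => // p Fp.
  by apply: sD => x /Fp; exact: orbit_rel_sym.
move=> D /UGP[F finF sD]; exists (pointwise_orbit_rel F); split; first by apply/UGP; exists F.
by move=> g h k gh hk; apply: sD => x Fx; exact: orbit_rel_trans (gh x Fx) (hk x Fx).
Qed.

Lemma UG_sub_leftU : UG G `<=` leftU G.
Proof.
move=> D /UGP[F finF sD].
exists [set p : GT G * GT G | exists2 s, St G F s & proj1_sig p.2 = proj1_sig p.1 \o s].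
split; first by exists F.
move=> [g h] [s [_ sF] /= hgs]; apply: sD => x Fx /=.
by rewrite hgs /= sF //; exact: orbit_rel_refl.
Qed.

Lemma UG_sub_rightU : UG G `<=` rightU G.
Proof.
move=> D /UGP[F finF sD].
exists [set p : GT G * GT G | exists2 s, St G F s & proj1_sig p.2 = s \o proj1_sig p.1].
split; first by exists F.
by move=> [g h] [s Ss /= hsg]; apply: sD => x _; exists s; rewrite //= hsg.
Qed.

Lemma UG_is_meet : hyp1 G -> is_meet (leftU G) (rightU G) (UG G).
Proof.
move=> factor; split; [exact: UG_uniformity | exact: UG_sub_leftU | exact: UG_sub_rightU |].
move=> W [_ [_ [_ [_ [_ Wsplit]]]]] WL WR D /Wsplit[E [WE EE]].
have [_ [[F1 [finF1 ->]] leftE]] := WL E WE.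
have [_ [[F2 [finF2 ->]] rightE]] := WR E WE.
have finF : finite_set (F1 `|` F2) by rewrite finite_setU.
apply/UGP; exists (F1 `|` F2) => // -[g h] gh.
have [f [s [Sf Ss hfgs]]] := factor _ finF g h gh.
have Ggs : G (proj1_sig g \o s).
  by case: PG Ss => _ _ Gcomp _ [Gs _]; exact: Gcomp (proj2_sig g) Gs.
apply: (EE g (exist _ _ Ggs) h).
  by apply: leftE; exists s => //; apply: subset_St Ss; exact: subsetUl.
by apply: rightE; exists f => //; apply: subset_St Sf; exact: subsetUr.
Qed.

Lemma UG_tot_bounded : tot_bounded (UX G) -> tot_bounded (UG G).
Proof.
move=> tbX D /UGP[F finF sD]; have [_ Gid _ _] := PG.
apply: has_finite_netS sD _.
exact: (finite_net_pointwise (exist _ id Gid) (fun g : GT G => proj1_sig g)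
  (orbit_rel_per F) (tbX _ (UX_orbit_rel finF)) finF).
Qed.

Lemma GT_val_inj : injective (fun g : GT G => proj1_sig g).
Proof. by move=> [g Gg] [h Gh] /= gh; exact: eq_exist. Qed.

Lemma roelcke_compactification_of_meet V Y (B : uniformType) (i : GT G -> Y -> B) :
  is_meet (leftU G) (rightU G) V -> injective i -> V = prod_comap i ->
  roelcke_compactification_is i.
Proof. by move=> MV iinj Vi W /(is_meet_unique MV) ->. Qed.

Section Completion.
Variables (B : uniformType) (e : X -> B).
Hypothesis Ce : is_completion (UX G) e.

Lemma completion_map_inj : injective (fun (g : GT G) x => e (proj1_sig g x)).
Proof.
case: Ce => _ _ einj _ _ g h egh; apply: GT_val_inj; apply/funext => x.
by apply: einj; exact: (congr1 (fun k => k x) egh).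
Qed.

Lemma UG_prod_comap_completion :
  UG G = prod_comap (fun (g : GT G) x => e (proj1_sig g x)).
Proof.
case: Ce => _ _ _ _ UXe; apply/seteqP; split=> D.
  move=> /UGP[F finF sD]; have := UX_orbit_rel finF; rewrite UXe => -[_ [[E entE ->] Eorb]].
  apply: (genS _ sD).
  apply: (genS (prod_comap_pointwise (fun (g : GT G) x => e (proj1_sig g x)) finF entE)).
  by move=> p Ep x Fx; apply: Eorb; exact: Ep x Fx.
move=> [_ [[F [E [finF entE ->]]] sD]]; apply: (genS _ sD); apply: gen_base.
by exists F, [set p | E (e p.1, e p.2)]; split=> //; rewrite UXe; apply: gen_base; exists E.
Qed.

Variable act : GT G -> B -> B.
Hypothesis ext : extends_action e act.

Lemma act_inj : injective act.
Proof.
move=> g h gh; apply: completion_map_inj; apply/funext => x.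
by rewrite /= -!(ext _).2 gh.
Qed.

Hypothesis h3 : hyp3 e act.

Lemma UG_act_entourage E b : entourage E -> UG G [set p | E (act p.1 b, act p.2 b)].
Proof.
move=> entE; rewrite UG_prod_comap_completion.
have [[x _ <-]|nb] := pselect (range e b).
  apply: (genS (prod_comap_pointwise _ (finite_set1 x) entE)).
  by move=> p /(_ x erefl); rewrite /= !(ext _).2.
have [F [V [finF entV sub]]] := h3 nb entE.
by apply: (genS (prod_comap_pointwise _ finF entV)) => -[g h]; exact: sub.
Qed.

Lemma UG_prod_comap_act : UG G = prod_comap act.
Proof.
apply/seteqP; split.
  rewrite UG_prod_comap_completion.
  have -> : (fun (g : GT G) x => e (proj1_sig g x)) = (fun g => act g \o e).
    by apply/funext => g; apply/funext => x; rewrite /= (ext g).2.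
  exact: prod_comap_reindex.
move=> D [_ [[F [E [finF entE ->]]] sD]].
have [_ [UGS _]] := UG_uniformity; apply: (UGS _ _ _ sD).
have [S ->] := finite_fsetP.1 finF.
have := @filter_bigI _ _ S _ _ (uniformity_filter UG_uniformity)
  (fun b _ => UG_act_entourage b entE).
by move/UGS; apply=> p Sp b Sb; exact: Sp b Sb.
Qed.

End Completion.
End PermutationGroup.

Unset Implicit Arguments.

Theorem theorem4p1 (X : Type) (G : set (X -> X)) :
  infinite_set [set: X] -> perm_subgroup G ->
  [/\ (hyp1 G -> is_meet (leftU G) (rightU G) (UG G)),
      (is_meet (leftU G) (rightU G) (UG G) -> tot_bounded (UX G) ->
         roelcke_precompact G /\
         forall (B : uniformType) (e : X -> B), is_completion (UX G) e ->
           roelcke_compactification_is (fun g : GT G => fun x => e (proj1_sig g x))) &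
      (is_meet (leftU G) (rightU G) (UG G) -> tot_bounded (UX G) ->
         forall (B : uniformType) (e : X -> B) (act : GT G -> B -> B),
           is_completion (UX G) e -> extends_action e act -> hyp3 e act ->
           UG G = prod_comap act /\ roelcke_compactification_is act)].
Proof.
move=> _ PG; split.
- exact: UG_is_meet.
- move=> M tbX; split=> [W /(is_meet_unique M) ->|B e Ce].
    exact: UG_tot_bounded.
  apply: roelcke_compactification_of_meet M (completion_map_inj Ce) _.
  exact: UG_prod_comap_completion.
- move=> M _ B e act Ce ext h3; have UGact := UG_prod_comap_act PG Ce ext h3.
  by split=> //; exact: roelcke_compactification_of_meet M (act_inj Ce ext) UGact.
Qed.
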